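(* Let $N\ge2$ and let $q$ be a primitive $4N$-th root of unity with $q^N=\mathbf{i}$. Then (a) $x_N=x_{N-1}=-1$; and (b) for a standard shifted tableau $\Lambda$ and an index $k$ with $q_k\neq q_{k+1}^{\pm1}$ (so that $\beta_k$ is defined), one has $\beta_k=0$ whenever $m_k+m_{k+1}+2=2N$.
   Context: $\mathbf{i}=\sqrt{-1}$, $[m]_{q^2}=(q^{2m}-q^{-2m})/(q^2-q^{-2})$. For each integer $m\ge0$ fix a square root $s_m$ of $[m+1]_{q^2}[m]_{q^2}$ and set $x_m=[m+1]_{q^2}-[m]_{q^2}-(q-q^{-1})s_m$. For a strict partition $\lambda$, its shifted diagram consists of boxes $(i,j)$ with $i\le j\le i+\lambda_i-1$; a standard shifted tableau $\Lambda$ fills it with $1,\dots,n$ increasing along rows and columns. For $1\le k\le n$, $(i_k,j_k)$ is the box containing $k$, $m_k=j_k-i_k$, $q_k=x_{m_k}$, and when $q_k\neq q_{k+1}^{\pm1}$, $\beta_k=1-(q-q^{-1})^2\left(\frac{q_{k+1}^{-1}q_k}{(q_{k+1}^{-1}q_k-1)^2}+\frac{q_{k+1}q_k}{(q_{k+1}q_k-1)^2}\right)$. *)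

From mathcomp Require Import all_boot all_order all_algebra all_field.
Set Implicit Arguments. Unset Strict Implicit. Unset Printing Implicit Defensive.
Import Order.TTheory GRing.Theory Num.Theory.
Local Open Scope ring_scope.

Definition qint (q : algC) (m : nat) : algC :=
  (q ^+ (2 * m) - q ^- (2 * m)) / (q ^+ 2 - q ^- 2).

(* x_m = [m+1] - [m] - (q - q^{-1}) s_m, with s a chosen family of square roots *)
Definition xval (q : algC) (s : nat -> algC) (m : nat) : algC :=
  qint q m.+1 - qint q m - (q - q^-1) * s m.

(* beta_k in terms of a = q_k and b = q_{k+1} *)
Definition beta (q a b : algC) : algC :=
  1 - (q - q^-1) ^+ 2 *
      ((b^-1 * a) / (b^-1 * a - 1) ^+ 2 + (b * a) / (b * a - 1) ^+ 2).

Definition strict_partition (lambda : seq nat) : bool :=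
  sorted (fun a b => (b < a)%N) lambda && all (fun a => (0 < a)%N) lambda.

(* shifted diagram (1-indexed rows/columns): boxes (i,j), 1 <= i <= l(lambda),
   i <= j <= i + lambda_i - 1 *)
Definition in_shifted_diagram (lambda : seq nat) (b : nat * nat) : bool :=
  [&& (1 <= b.1)%N, (b.1 <= size lambda)%N, (b.1 <= b.2)%N &
      (b.2 <= b.1 + nth 0%N lambda b.1.-1 - 1)%N].

Definition increasing_rows_cols (n : nat) (pos : nat -> nat * nat) : Prop :=
  (forall k l, (1 <= k <= n)%N -> (1 <= l <= n)%N ->
     (pos k).1 = (pos l).1 -> ((pos k).2 < (pos l).2)%N -> (k < l)%N) /\
  (forall k l, (1 <= k <= n)%N -> (1 <= l <= n)%N ->
     (pos k).2 = (pos l).2 -> ((pos k).1 < (pos l).1)%N -> (k < l)%N).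

(* A standard shifted tableau of shape lambda, described by the function
   pos : k |-> (i_k, j_k), the box containing k, for 1 <= k <= n = |lambda|. *)
Definition standard_shifted_tableau (lambda : seq nat) (pos : nat -> nat * nat) : Prop :=
  let n := sumn lambda in
  [/\ strict_partition lambda,
      (forall k, (1 <= k <= n)%N -> in_shifted_diagram lambda (pos k)),
      (forall k l, (1 <= k <= n)%N -> (1 <= l <= n)%N -> pos k = pos l -> k = l),
      (forall b, in_shifted_diagram lambda b -> exists2 k, (1 <= k <= n)%N & pos k = b) &
      increasing_rows_cols n pos].

Definition mk (pos : nat -> nat * nat) (k : nat) : nat := ((pos k).2 - (pos k).1)%N.

(** With p = q^(2m), the difference c_m = [m+1] - [m] and the product
    [m+1][m] are Laurent polynomials in p and q satisfying
    c_m^2 - (q - q^-1)^2 [m+1][m] = 1, so x_m = c_m - (q - q^-1) s_m is a root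
    of x^2 - 2 c_m x + 1, i.e. x_m + x_m^-1 = 2 c_m.  Writing A = a + a^-1 and
    B = b + b^-1, one has beta(a, b) = 1 - (q - q^-1)^2 (AB - 4) / (A - B)^2,
    and if q^(2m) q^(2m') q^4 = 1 (that is m + m' + 2 = 2N, as q^(4N) = 1) then
    (A - B)^2 = (q - q^-1)^2 (AB - 4) for A = 2 c_m, B = 2 c_m', so beta = 0.
    For part (a), q^(2N) = -1 gives [N] = 0, hence s_N = s_(N-1) = 0, and
    x_N = [N+1] = -1, x_(N-1) = -[N-1] = -1. *)

From mathcomp Require Import all_boot all_order all_algebra all_field.
From mathcomp Require Import ring.
Set Implicit Arguments. Unset Strict Implicit. Unset Printing Implicit Defensive.
Import Order.TTheory GRing.Theory Num.Theory.
Local Open Scope ring_scope.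

Lemma quadratic_add_inv (F : fieldType) (x c : F) :
  x ^+ 2 - 2 * c * x + 1 = 0 -> x != 0 /\ x + x^-1 = 2 * c.
Proof.
move=> root_x.
have x_neq0 : x != 0.
  by apply: contraPneq root_x => ->; rewrite expr0n mulr0 !subr0 add0r; exact/eqP/oner_neq0.
split=> //; apply: (mulfI x_neq0); rewrite mulrDr mulfV //.
by apply/eqP; rewrite -subr_eq0 -root_x; apply/eqP; ring.
Qed.

Lemma sub_add_inv (F : fieldType) (a b : F) : a != 0 -> b != 0 ->
  (a + a^-1) - (b + b^-1) = (a - b) * (a * b - 1) / (a * b).
Proof. by move=> a_neq0 b_neq0; field; rewrite a_neq0 b_neq0. Qed.

Lemma sub_add_inv_neq0 (F : fieldType) (a b : F) :
  a != 0 -> b != 0 -> a != b -> a != b^-1 -> (a + a^-1) - (b + b^-1) != 0.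
Proof.
move=> a_neq0 b_neq0 ab abV; rewrite sub_add_inv //.
rewrite !mulf_neq0 ?invr_eq0 ?mulf_neq0 ?subr_eq0 //.
by apply: contra abV => /eqP ab1; rewrite -(mulfK b_neq0 a) ab1 mul1r.
Qed.

Lemma betaE (q a b : algC) : a != 0 -> b != 0 -> a != b -> a != b^-1 ->
  beta q a b = 1 - (q - q^-1) ^+ 2 * ((a + a^-1) * (b + b^-1) - 4)
                   / ((a + a^-1) - (b + b^-1)) ^+ 2.
Proof.
move=> a_neq0 b_neq0 ab abV.
have := sub_add_inv_neq0 a_neq0 b_neq0 ab abV.
rewrite /beta sub_add_inv //; move: ((q - q^-1) ^+ 2) => t nz.
have ab1 : a * b - 1 != 0 by apply: contraNneq nz => ->; rewrite mulr0 mul0r.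
by field; rewrite a_neq0 b_neq0 ab1 subr_eq0 ab.
Qed.

Lemma beta_eq0 (q a b : algC) : a != 0 -> b != 0 -> a != b -> a != b^-1 ->
  ((a + a^-1) - (b + b^-1)) ^+ 2 = (q - q^-1) ^+ 2 * ((a + a^-1) * (b + b^-1) - 4) ->
  beta q a b = 0.
Proof.
move=> a_neq0 b_neq0 ab abV AB.
have nz := sub_add_inv_neq0 a_neq0 b_neq0 ab abV.
by rewrite betaE // -AB divff ?subrr // expf_neq0.
Qed.

Definition qint_diff (q : algC) (m : nat) : algC := qint q m.+1 - qint q m.

Definition qint_diff_at (q p : algC) : algC :=
  ((p * q ^+ 2 - (p * q ^+ 2)^-1) - (p - p^-1)) / (q ^+ 2 - q ^- 2).

Lemma qint_diffE (q : algC) (m : nat) : qint_diff q m = qint_diff_at q (q ^+ (2 * m)).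
Proof. by rewrite /qint_diff /qint_diff_at /qint mulnS exprD [q ^+ 2 * _]mulrC -mulrBl. Qed.

Lemma xval_sqrt0 (q : algC) (s : nat -> algC) (m : nat) :
  s m ^+ 2 = qint q m.+1 * qint q m -> qint q m.+1 * qint q m = 0 ->
  xval q s m = qint_diff q m.
Proof.
move=> s_sqr qq0; have /eqP s0 : s m == 0 by rewrite -sqrf_eq0 s_sqr qq0.
by rewrite /xval s0 mulr0 subr0.
Qed.

Section QIntegers.

Variable q : algC.
Hypotheses (q_neq0 : q != 0) (q4_neq1 : q ^+ 4 != 1).

(* The form in which [field] asks for q^2 - q^-2 to be nonzero. *)
Lemma q4_sub1_neq0 : (q * q) ^+ 2 - 1 != 0.
Proof. by rewrite -expr2 -exprM subr_eq0. Qed.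

Lemma qint_diff_sqr (m : nat) :
  qint_diff q m ^+ 2 - (q - q^-1) ^+ 2 * (qint q m.+1 * qint q m) = 1.
Proof.
rewrite qint_diffE /qint mulnS exprD [q ^+ 2 * _]mulrC.
move: (q ^+ (2 * m)) (expf_neq0 (2 * m) q_neq0) => p p_neq0.
by rewrite /qint_diff_at; field; rewrite q_neq0 p_neq0 q4_sub1_neq0.
Qed.

Lemma qint_diff_at_compl (p1 p2 : algC) : p1 != 0 -> p1 * p2 * q ^+ 4 = 1 ->
  (2 * qint_diff_at q p1 - 2 * qint_diff_at q p2) ^+ 2
  = (q - q^-1) ^+ 2 * (2 * qint_diff_at q p1 * (2 * qint_diff_at q p2) - 4).
Proof.
move=> p1_neq0 p12.
have p1q4_neq0 : p1 * q ^+ 4 != 0 by rewrite mulf_neq0 ?expf_neq0.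
have -> : p2 = (p1 * q ^+ 4)^-1.
  by apply: (mulfI p1q4_neq0); rewrite divff // -p12; ring.
by rewrite /qint_diff_at; field; rewrite q_neq0 p1_neq0 q4_sub1_neq0.
Qed.

Lemma qint_half_eq0 (N : nat) : q ^+ (2 * N) = -1 -> qint q N = 0.
Proof. by move=> q2N; rewrite /qint q2N invrN1 subrr mul0r. Qed.

Lemma qint_succ_half (N : nat) : q ^+ (2 * N) = -1 -> qint q N.+1 = -1.
Proof.
move=> q2N; rewrite /qint mulnS exprD q2N.
by field; rewrite q_neq0 q4_sub1_neq0.
Qed.

Lemma qint_pred_half (n : nat) : q ^+ (2 * n.+1) = -1 -> qint q n = 1.
Proof.
rewrite mulnS exprD => q2N.
have q2_neq0 : q ^+ 2 != 0 by rewrite expf_neq0.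
have q2nE : q ^+ (2 * n) = - q ^- 2.
  by rewrite -[q ^+ (2 * n)]mul1r -(mulVf q2_neq0) -mulrA q2N mulrN1.
by rewrite /qint q2nE invrN; field; rewrite q_neq0 q4_sub1_neq0.
Qed.

Variable s : nat -> algC.
Hypothesis s_sqr : forall m, s m ^+ 2 = qint q m.+1 * qint q m.

Lemma xval_root (m : nat) : xval q s m ^+ 2 - 2 * qint_diff q m * xval q s m + 1 = 0.
Proof.
have E := qint_diff_sqr m; rewrite -s_sqr in E.
by rewrite -[X in _ + X]E /xval -/(qint_diff q m); ring.
Qed.

Lemma xval_beta_eq0 (m1 m2 : nat) : q ^+ (2 * (m1 + m2 + 2)) = 1 ->
  xval q s m1 != xval q s m2 -> xval q s m1 != (xval q s m2)^-1 ->
  beta q (xval q s m1) (xval q s m2) = 0.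
Proof.
move=> qm ab abV.
have [a_neq0 a_sum] := quadratic_add_inv (xval_root m1).
have [b_neq0 b_sum] := quadratic_add_inv (xval_root m2).
apply: beta_eq0 => //; rewrite a_sum b_sum !qint_diffE.
by apply: qint_diff_at_compl; rewrite ?expf_neq0 // -!exprD -qm !mulnDr.
Qed.

End QIntegers.

Theorem lemma2p31 (N : nat) (q : algC) (s : nat -> algC) :
  (2 <= N)%N ->
  (4 * N)%N.-primitive_root q ->
  q ^+ N = 'i ->
  (forall m : nat, s m ^+ 2 = qint q m.+1 * qint q m) ->
  (xval q s N = -1 /\ xval q s N.-1 = -1) /\
  (forall (lambda : seq nat) (pos : nat -> nat * nat) (k : nat),
     standard_shifted_tableau lambda pos ->
     (1 <= k)%N -> (k < sumn lambda)%N ->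
     xval q s (mk pos k) != xval q s (mk pos k.+1) ->
     xval q s (mk pos k) != (xval q s (mk pos k.+1))^-1 ->
     (mk pos k + mk pos k.+1 + 2 = 2 * N)%N ->
     beta q (xval q s (mk pos k)) (xval q s (mk pos k.+1)) = 0).
Proof.
move=> N_ge2 prim qN s_sqr.
have q_neq0 : q != 0.
  by apply: contraNneq (neq0Ci algC) => q0; rewrite -qN q0 expr0n (gtn_eqF (ltnW N_ge2)).
have q4_neq1 : q ^+ 4 != 1.
  by rewrite -(prim_order_dvd prim) gtnNdvd // -[X in (X < _)%N]muln1 ltn_pmul2l.
have q2N : q ^+ (2 * N) = -1 by rewrite mulnC exprM qN sqrCi.
split.
  have qN0 := qint_half_eq0 q2N.
  case: N N_ge2 prim qN q2N qN0 => [|n] // _ _ _ q2N qN0 /=.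
  have -> : xval q s n.+1 = qint_diff q n.+1.
    by apply: xval_sqrt0 (s_sqr _) _; rewrite qN0 mulr0.
  have -> : xval q s n = qint_diff q n.
    by apply: xval_sqrt0 (s_sqr _) _; rewrite qN0 mul0r.
  by rewrite /qint_diff qN0 qint_succ_half // qint_pred_half // subr0 sub0r.
(* Only the contents m_k and m_(k+1) enter. *)
move=> lambda pos k _ _ _ ab abV m_sum.
apply: (xval_beta_eq0 q_neq0 q4_neq1 s_sqr _ ab abV).
by rewrite m_sum mulnA; exact: prim_expr_order prim.
Qed.
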